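(* Let $\rho$ be a density matrix on $\mathbb{C}^d$ and $X$ a $d\times d$ Hermitian matrix. Then $I^s(\rho,X)$ is a monotonically decreasing function of $s\in[-\infty,0]$ and is bounded by the variance: $I^{0}(\rho,X)\le I^{s}(\rho,X)\le I^{t}(\rho,X)\le I^{-\infty}(\rho,X)\le V(\rho,X)$ for all $-\infty\le t\le s\le 0$, where $V(\rho,X)=\mathrm{Tr}[\rho X^\dagger X]-|\mathrm{Tr}[\rho X^\dagger]|^2$. Moreover, if $\rho$ is a pure state, then $I^s(\rho,X)=V(\rho,X)$ for every $s\in[-\infty,0]$.
   Context: Write $\rho=\sum_{i=1}^{d}\lambda_i|\psi_i\rangle\langle\psi_i|$ with $\{|\psi_i\rangle\}$ an orthonormal basis of eigenvectors of $\rho$ and $\lambda_1\ge\cdots\ge\lambda_d\ge 0$. For $-\infty<s<0$ and $a_1,a_2>0$ define $m_s(a_1,a_2)=\left(\frac{a_1^s+a_2^s}{2}\right)^{1/s}$; set $m_0(a_1,a_2)=\sqrt{a_1a_2}$, $m_{-\infty}(a_1,a_2)=\min\{a_1,a_2\}$, and $m_s(a,0)=m_s(0,a)=m_s(0,0)=0$ for all $s\in[-\infty,0]$. Define $\zeta_\rho^s(X,Y)=\mathrm{Tr}[\rho X^\dagger Y]-\sum_{i,j=1}^d m_s(\lambda_i,\lambda_j)\langle\psi_i|X^\dagger|\psi_j\rangle\langle\psi_j|Y|\psi_i\rangle$ and $I^s(\rho,X)=\zeta_\rho^s(X,X)$. *)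

From HB Require Import structures.
From mathcomp Require Import all_boot all_order all_algebra.
From mathcomp Require Import complex.
From mathcomp Require Import boolp reals constructive_ereal ereal exp.
Set Implicit Arguments. Unset Strict Implicit. Unset Printing Implicit Defensive.
Import Order.TTheory GRing.Theory Num.Theory.
Local Open Scope ring_scope.
Local Open Scope complex_scope.

Definition adj (R : realType) (m n : nat) (A : 'M[R[i]]_(m, n)) : 'M[R[i]]_(n, m) :=
  (map_mx Num.conj A)^T.

Definition hermitian_mx (R : realType) (d : nat) (A : 'M[R[i]]_d) : Prop := adj A = A.

Definition psd (R : realType) (d : nat) (A : 'M[R[i]]_d) : Prop :=
  hermitian_mx A /\ forall v : 'cV[R[i]]_d, 0 <= (adj v *m A *m v) 0 0.

Definition density_matrix (R : realType) (d : nat) (rho : 'M[R[i]]_d) : Prop :=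
  psd rho /\ \tr rho = 1.

Definition unitary_mx (R : realType) (d : nat) (U : 'M[R[i]]_d) : Prop :=
  adj U *m U = 1%:M.

(* The power mean m_s(a1,a2) for s in [-oo,0] (s an extended real):
   s = -oo : min; s = 0 : geometric mean; -oo < s < 0 : ((a1^s+a2^s)/2)^(1/s);
   and m_s(a,0) = m_s(0,a) = 0. (Values for s > 0 or s = +oo are never used.) *)
Definition mean_s (R : realType) (s : \bar R) (a1 a2 : R) : R :=
  if (a1 == 0) || (a2 == 0) then 0 else
  match s with
  | -oo%E => Num.min a1 a2
  | (r%:E)%E => if r == 0 then Num.sqrt (a1 * a2)
                else ((a1 `^ r + a2 `^ r) / 2) `^ (r^-1)
  | +oo%E => 0
  end.

(* zeta_rho^s(X,Y), where rho = sum_i lam i |psi_i><psi_i| and psi_i is the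
   i-th column of U; <psi_i|A|psi_j> = (U^dagger A U) i j. *)
Definition zeta (R : realType) (d : nat) (s : \bar R) (rho U : 'M[R[i]]_d)
    (lam : 'I_d -> R) (X Y : 'M[R[i]]_d) : R[i] :=
  \tr (rho *m adj X *m Y)
  - \sum_(i < d) \sum_(j < d)
      (mean_s s (lam i) (lam j))%:C * (adj U *m adj X *m U) i j
                                   * (adj U *m Y *m U) j i.

Definition Is (R : realType) (d : nat) (s : \bar R) (rho U : 'M[R[i]]_d)
    (lam : 'I_d -> R) (X : 'M[R[i]]_d) : R[i] := zeta s rho U lam X X.

Definition variance (R : realType) (d : nat) (rho X : 'M[R[i]]_d) : R[i] :=
  \tr (rho *m adj X *m X) - (`|\tr (rho *m adj X)| ^+ 2).

(* Write A = U^dagger X U, a Hermitian matrix.  Then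
     I^s(rho, X) = Tr[rho X^2] - sum_(i,j) m_s(lam_i, lam_j) |A_ij|^2
   and V(rho, X) = Tr[rho X^2] - |sum_i lam_i A_ii|^2, so monotonicity in s is
   that of the power means: min <= m_q <= m_r <= sqrt for q <= r < 0, the
   middle inequality by convexity of x |-> x^(q/r).  Keeping only the diagonal
   terms, where m_(-oo)(lam_i, lam_i) = lam_i, and using the convexity of |.|^2
   against the probability weights lam gives I^(-oo) <= V.  For a pure state
   lam is a 0/1 vector with a single 1, so m_s(lam_i, lam_j) = lam_i lam_j and
   both sums reduce to the same diagonal term. *)

From HB Require Import structures.
From mathcomp Require Import all_boot all_order all_algebra.
From mathcomp Require Import complex.
From mathcomp Require Import boolp reals constructive_ereal ereal exp.
From mathcomp Require Import classical_sets convex hoelder.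
From mathcomp Require Import ring lra.
Import Order.TTheory GRing.Theory Num.Theory.
Local Open Scope ring_scope.
Local Open Scope complex_scope.

Lemma idemr_eq01 {R : idomainType} (x : R) : x * x = x -> x = 0 \/ x = 1.
Proof.
move=> xx; have /eqP : x * (x - 1) = 0 by rewrite mulrBr mulr1 xx subrr.
by rewrite mulf_eq0 subr_eq0 => /orP[] /eqP->; [left|right].
Qed.

Lemma idem_weights_orth {R : numDomainType} {I : finType} (w : I -> R) :
  (forall i, 0 <= w i) -> \sum_i w i = 1 -> (forall i, w i * w i = w i) ->
  forall i j, i != j -> w i * w j = 0.
Proof.
move=> w0 w1 w_idem i j ij.
have : w i + w j <= 1.
  rewrite -w1 (bigD1 i) //= (bigD1 j) 1?eq_sym //= addrA lerDl.
  exact: sumr_ge0.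
case: (idemr_eq01 _ (w_idem i)) => ->; first by rewrite mul0r.
case: (idemr_eq01 _ (w_idem j)) => ->; first by rewrite mulr0.
by rewrite gerDl ler10.
Qed.

Section PowerMean.
Context {R : realType}.
Implicit Types a b e k r q x y : R.

Lemma convex_powR_mid k x y : 1 <= k -> 0 <= x -> 0 <= y ->
  ((x + y) / 2) `^ k <= (x `^ k + y `^ k) / 2.
Proof.
move=> k1 x0 y0.
have half01 : (0 <= 2^-1 :> R) && (2^-1 <= 1 :> R).
  by rewrite invr_ge0 invf_le1 ?ler0n ?ler1n.
have mem0 z : 0 <= z -> z \in (`[0, +oo[%classic : classical_sets.set R).
  by move=> z0; rewrite inE /= in_itv /= z0.
have := convex_powR k1 (Itv01 (andP half01).1 (andP half01).2) (mem0 _ x0) (mem0 _ y0).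
have half_onem : (1 - 2^-1 : R) = 2^-1 by rewrite {1}(splitr 1) div1r addrK.
rewrite convRE /= /unstable.onem half_onem -mulrDr mulrC; apply: le_trans.
by rewrite [conv _ _ _]/conv /= /unstable.onem half_onem -mulrDr mulrC.
Qed.

Lemma le0_ger_powR e x y : e <= 0 -> 0 < x -> x <= y -> y `^ e <= x `^ e.
Proof.
move=> e0 x0 xy; have y0 := lt_le_trans x0 xy.
rewrite -(opprK e) (powRN x) (powRN y) lef_pV2 ?posrE ?powR_gt0 //.
by apply: ge0_ler_powR; rewrite ?oppr_ge0 ?nnegrE ?(ltW x0) ?(ltW y0).
Qed.

Lemma powRK r x : r != 0 -> 0 <= x -> (x `^ r) `^ r^-1 = x.
Proof. by move=> r0 x0; rewrite -powRrM mulfV // powRr1. Qed.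

Definition pmean r a b := ((a `^ r + b `^ r) / 2) `^ r^-1.

Lemma le_pmean_powR r a b x : r < 0 -> 0 < a -> 0 < b -> 0 < x ->
  (a `^ r + b `^ r) / 2 <= x `^ r -> x <= pmean r a b.
Proof.
move=> r0 a0 b0 x0 le_avg.
rewrite -(powRK _ _ (ltr0_neq0 r0) (ltW x0)) le0_ger_powR ?invr_le0 ?(ltW r0) //.
by rewrite divr_gt0 ?addr_gt0 ?powR_gt0.
Qed.

Lemma pmean_le_powR r a b x : r < 0 -> 0 < x ->
  x `^ r <= (a `^ r + b `^ r) / 2 -> pmean r a b <= x.
Proof.
move=> r0 x0 le_avg.
rewrite -[leRHS](powRK _ _ (ltr0_neq0 r0) (ltW x0)) le0_ger_powR ?invr_le0 ?(ltW r0) //.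
exact: powR_gt0.
Qed.

Lemma min_le_pmean r a b : r < 0 -> 0 < a -> 0 < b -> Num.min a b <= pmean r a b.
Proof.
move=> r0 a0 b0; have m0 : 0 < Num.min a b by rewrite lt_min a0 b0.
apply: le_pmean_powR => //.
have : a `^ r <= (Num.min a b) `^ r by apply: le0_ger_powR; rewrite ?(ltW r0) ?ge_min ?lexx.
have : b `^ r <= (Num.min a b) `^ r.
  by apply: le0_ger_powR; rewrite ?(ltW r0) ?ge_min ?lexx ?orbT.
lra.
Qed.

Lemma sqrtr_powR x r : 0 <= x -> Num.sqrt x `^ r = Num.sqrt (x `^ r).
Proof. by move=> x0; rewrite -powR12_sqrt // powRAC powR12_sqrt ?powR_ge0. Qed.

Lemma pmean_le_sqrt r a b : r < 0 -> 0 < a -> 0 < b -> pmean r a b <= Num.sqrt (a * b).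
Proof.
move=> r0 a0 b0; apply: pmean_le_powR; rewrite ?sqrtr_gt0 ?mulr_gt0 //.
rewrite sqrtrM ?(ltW a0) // powRM ?sqrtr_ge0 // !sqrtr_powR ?(ltW a0) ?(ltW b0) //.
have := sqr_sqrtr (powR_ge0 a r); have := sqr_sqrtr (powR_ge0 b r).
set u := Num.sqrt _; set v := Num.sqrt _ => <- <-.
have : 0 <= (u - v) ^+ 2 by rewrite sqr_ge0.
rewrite !expr2; lra.
Qed.

Lemma pmean_mono q r a b : q <= r -> r < 0 -> 0 < a -> 0 < b ->
  pmean q a b <= pmean r a b.
Proof.
move=> qr r0 a0 b0; have q0 := le_lt_trans qr r0.
apply: pmean_le_powR; rewrite ?powR_gt0 ?divr_gt0 ?addr_gt0 ?powR_gt0 //.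
have k1 : 1 <= q / r by rewrite ler_ndivlMr // mul1r.
have -> : q = r * (q / r) by rewrite mulrC divfK ?ltr0_neq0.
move: (q / r) k1 => k k1.
rewrite -powRrM mulrA mulVf ?ltr0_neq0 // mul1r !powRrM.
by apply: convex_powR_mid; rewrite ?powR_ge0.
Qed.

Lemma min_le_sqrt a b : 0 < a -> 0 < b -> Num.min a b <= Num.sqrt (a * b).
Proof.
move=> a0 b0; have n1 : (-1 : R) < 0 by rewrite ltrN10.
by apply: (le_trans (y := pmean (-1) a b)); [apply: min_le_pmean | apply: pmean_le_sqrt].
Qed.

Lemma mean_s_ge0 s a b : 0 <= a -> 0 <= b -> 0 <= mean_s s a b.
Proof.
move=> a0 b0; rewrite /mean_s; case: ifP => // _.
case: s => [r| |] //; last by rewrite le_min a0 b0.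
by case: ifP => _; rewrite ?sqrtr_ge0 ?powR_ge0.
Qed.

Lemma mean_sxx s a : (s <= 0%:E)%E -> 0 <= a -> mean_s s a a = a.
Proof.
move=> s0 a0; rewrite /mean_s orbb; case: eqP => [->//|_].
case: s s0 => [r| |] //= _; last exact: minxx.
case: eqP => [_|/eqP r0]; first by rewrite sqrtr_sqr ger0_norm.
have -> : (a `^ r + a `^ r) / 2 = a `^ r by lra.
exact: powRK.
Qed.

Lemma mean_s_mono s t a b : (t <= s)%E -> (s <= 0%:E)%E -> 0 <= a -> 0 <= b ->
  mean_s t a b <= mean_s s a b.
Proof.
move=> ts s0 a0 b0; rewrite /mean_s; case: ifP => [_|/norP[an bn]]; first exact: lexx.
have {an a0} a0 : 0 < a by rewrite lt_def an.
have {bn b0} b0 : 0 < b by rewrite lt_def bn.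
case: s ts s0 => [r| |] ts s0; last 2 first.
- by rewrite leye_eq in s0.
- by move: ts; rewrite leeNy_eq => /eqP->.
rewrite lee_fin in s0; case: t ts => [q| |] ts; last 2 first.
- by rewrite leye_eq in ts.
- case: eqP => [_|/eqP rn]; first exact: min_le_sqrt.
  by apply: min_le_pmean => //; rewrite lt_neqAle rn.
rewrite lee_fin in ts; case: (eqVneq q 0) => [q0|qn].
  have r0 : r = 0 by apply: le_anti; rewrite s0 -q0 ts.
  by rewrite r0 eqxx.
have q0 : q < 0 by rewrite lt_neqAle qn (le_trans ts).
case: eqP => [_|/eqP rn]; first exact: pmean_le_sqrt.
by apply: pmean_mono; rewrite // lt_neqAle rn.
Qed.

Lemma mean_s_idem s a b : (s <= 0%:E)%E -> a * a = a -> b * b = b ->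
  mean_s s a b = a * b.
Proof.
move=> s0 /idemr_eq01[->|->] /idemr_eq01[->|->].
- by rewrite mul0r /mean_s eqxx.
- by rewrite mul0r /mean_s eqxx.
- by rewrite mulr0 /mean_s eqxx orbT.
- by rewrite mulr1 mean_sxx.
Qed.

End PowerMean.

Section Adjoint.
Context {R : realType}.

Lemma adjE m n (A : 'M[R[i]]_(m, n)) i j : adj A i j = Num.conj (A j i).
Proof. by rewrite !mxE. Qed.

Lemma adjM m n p (A : 'M[R[i]]_(m, n)) (B : 'M[R[i]]_(n, p)) :
  adj (A *m B) = adj B *m adj A.
Proof. by rewrite /adj map_mxM trmx_mul. Qed.

Lemma adjK m n (A : 'M[R[i]]_(m, n)) : adj (adj A) = A.
Proof. by apply/matrixP => i j; rewrite !adjE conjCK. Qed.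

Lemma hermitian_mxE {d} {A : 'M[R[i]]_d} :
  hermitian_mx A -> forall i j, A j i = Num.conj (A i j).
Proof. by move=> hA i j; rewrite -adjE hA. Qed.

Lemma hermitian_conjmx {d} (U X : 'M[R[i]]_d) :
  hermitian_mx X -> hermitian_mx (adj U *m X *m U).
Proof. by move=> hX; rewrite /hermitian_mx !adjM adjK hX mulmxA. Qed.

End Adjoint.

Lemma sqr_norm_convex_comb_le {C : numClosedFieldType} {I : finType} (w a : I -> C) :
  (forall i, 0 <= w i) -> \sum_i w i = 1 ->
  `|\sum_i w i * a i| ^+ 2 <= \sum_i w i * `|a i| ^+ 2.
Proof.
move=> w0 w1; set T := \sum_i w i * a i.
have conjT : Num.conj T = \sum_i w i * Num.conj (a i).
  by rewrite rmorph_sum; apply: eq_bigr => i _; rewrite rmorphM /= geC0_conj.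
have spread : \sum_i w i * `|a i - T| ^+ 2 = \sum_i w i * `|a i| ^+ 2 - `|T| ^+ 2.
  have expand i : w i * `|a i - T| ^+ 2 = w i * `|a i| ^+ 2
      - (w i * a i * Num.conj T + T * (w i * Num.conj (a i))) + w i * (T * Num.conj T).
    by rewrite !normCK rmorphB /=; ring.
  rewrite (eq_bigr _ (fun i _ => expand i)) big_split sumrB big_split /=.
  by rewrite -mulr_suml -mulr_sumr -mulr_suml w1 -conjT -/T normCK; ring.
rewrite -subr_ge0 -spread; apply: sumr_ge0 => i _.
by rewrite mulr_ge0 ?exprn_ge0.
Qed.

Section Spectral.
Variables (R : realType) (d : nat) (rho U : 'M[R[i]]_d) (lam : 'I_d -> R).
Hypothesis hU : unitary_mx U.
Hypothesis hrho : rho = U *m diag_mx (\row_i (lam i)%:C) *m adj U.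

Lemma mxtrace_spectral M :
  \tr (rho *m M) = \sum_i (lam i)%:C * (adj U *m M *m U) i i.
Proof.
rewrite hrho -!mulmxA mxtrace_mulC -!mulmxA.
by apply: eq_bigr => i _; rewrite mul_diag_mx !mxE.
Qed.

Lemma mxtrace_spectral1 : \tr rho = \sum_i (lam i)%:C.
Proof.
rewrite -[rho]mulmx1 mxtrace_spectral mulmx1 hU.
by apply: eq_bigr => i _; rewrite mxE eqxx mulr1.
Qed.

Lemma spectral_idem : rho *m rho = rho -> forall i, lam i * lam i = lam i.
Proof.
move=> rho2 i; set D := diag_mx (\row_i (lam i)%:C).
have UUadj : U *m adj U = 1%:M by apply: mulmx1C.
have diagE : adj U *m rho *m U = D.
  by rewrite hrho -!mulmxA hU mulmx1 mulmxA hU mul1mx.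
have : D *m D = D.
  rewrite -diagE -!mulmxA (mulmxA U) UUadj mul1mx (mulmxA rho) rho2.
  by rewrite !mulmxA.
move/matrixP/(_ i i); rewrite /D mul_diag_mx !mxE eqxx mulr1n.
by rewrite -rmorphM => /complexI.
Qed.

Variable X : 'M[R[i]]_d.
Hypothesis hX : hermitian_mx X.
Local Notation A := (adj U *m X *m U).

Lemma Is_spectral s : Is s rho U lam X = \tr (rho *m X *m X)
  - \sum_i \sum_j (mean_s s (lam i) (lam j))%:C * `|A i j| ^+ 2.
Proof.
rewrite /Is /zeta hX; congr (_ - _); apply: eq_bigr => i _; apply: eq_bigr => j _.
by rewrite -mulrA (hermitian_mxE (hermitian_conjmx U X hX) i j) normCK.
Qed.

Lemma variance_spectral : variance rho X =
  \tr (rho *m X *m X) - `|\sum_i (lam i)%:C * A i i| ^+ 2.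
Proof. by rewrite /variance hX mxtrace_spectral. Qed.

Hypothesis lam_ge0 : forall i, 0 <= lam i.

Lemma Is_mono s t : (t <= s)%E -> (s <= 0%:E)%E ->
  Is s rho U lam X <= Is t rho U lam X.
Proof.
move=> ts s0; rewrite !Is_spectral lerD2l lerN2.
apply: ler_sum => i _; apply: ler_sum => j _.
by rewrite ler_wpM2r ?exprn_ge0 // lecR mean_s_mono.
Qed.

Hypothesis tr_rho1 : \tr rho = 1.

Lemma Is_Ny_le_variance : Is -oo%E rho U lam X <= variance rho X.
Proof.
rewrite Is_spectral variance_spectral lerD2l lerN2.
have lam_sum1 : \sum_i (lam i)%:C = 1 by rewrite -mxtrace_spectral1.
have lamC_ge0 i : 0 <= (lam i)%:C by rewrite ler0c.
apply: le_trans (sqr_norm_convex_comb_le _ _ lamC_ge0 lam_sum1) _.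
apply: ler_sum => i _; rewrite (bigD1 i) //= mean_sxx ?leNye // lerDl.
by apply: sumr_ge0 => j _; rewrite mulr_ge0 ?exprn_ge0 ?normr_ge0 ?ler0c ?mean_s_ge0.
Qed.

Lemma Is_pure s : rho *m rho = rho -> (s <= 0%:E)%E ->
  Is s rho U lam X = variance rho X.
Proof.
move=> rho2 s0; have lam_idem := spectral_idem rho2.
have lam_sum1 : \sum_i lam i = 1.
  by apply: complexI; rewrite rmorph_sum -mxtrace_spectral1.
have lam_orth := idem_weights_orth _ lam_ge0 lam_sum1 lam_idem.
rewrite Is_spectral variance_spectral normCK rmorph_sum mulr_suml; congr (_ - _).
apply: eq_bigr => i _; rewrite mulr_sumr; apply: eq_bigr => j _.
have conj_lam k : Num.conj (lam k)%:C = (lam k)%:C by rewrite geC0_conj ?ler0c.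
rewrite mean_s_idem //; have [<-|ij] := eqVneq i j.
  by rewrite normCK !rmorphM /= conj_lam; ring.
transitivity ((lam i * lam j)%:C * (A i i * Num.conj (A j j))).
  by rewrite lam_orth // !mul0r.
by rewrite !rmorphM /= conj_lam; ring.
Qed.

End Spectral.

Theorem theorem2 (R : realType) (d : nat) (rho X U : 'M[R[i]]_d) (lam : 'I_d -> R) :
  density_matrix rho ->
  hermitian_mx X ->
  (* {psi_i} (columns of U) orthonormal eigenbasis of rho, eigenvalues lam sorted *)
  unitary_mx U ->
  rho = U *m diag_mx (\row_i (lam i)%:C) *m adj U ->
  (forall i j : 'I_d, (i <= j)%N -> lam j <= lam i) ->
  (forall i, 0 <= lam i) ->
  (forall s t : \bar R, (t <= s)%E -> (s <= 0%:E)%E ->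
     Is 0%:E rho U lam X <= Is s rho U lam X /\
     Is s rho U lam X <= Is t rho U lam X /\
     Is t rho U lam X <= Is -oo%E rho U lam X /\
     Is -oo%E rho U lam X <= variance rho X) /\
  (rho *m rho = rho ->
     forall s : \bar R, (s <= 0%:E)%E -> Is s rho U lam X = variance rho X).
Proof.
move=> [_ tr_rho1] hX hU hrho _ lam_ge0; split; last first.
  by move=> rho2 s s0; apply: Is_pure.
move=> s t ts s0; have t0 := le_trans ts s0.
split; first by apply: Is_mono.
split; first by apply: Is_mono.
split; first by apply: Is_mono; rewrite ?leNye.
exact: Is_Ny_le_variance.
Qed.
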